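(* Let $f:\mathbb{R}^n\to\mathbb{R}$ be a continuous loss function which is $\mu$-strongly convex and $L$-smooth, with global minimum $w^*$. Then every sequence $(w_i)$ generated by the Loss-Guarded L2O algorithm using deterministic gradient descent with step size $\frac{\alpha}{L}$, $\alpha\in\,]0,\min(2,2\mu L)[$, as the guarding mechanism converges to $w^*$: $\lim_{i\to\infty}w_i=w^*$.
   Context: Loss-Guarded L2O algorithm with deterministic gradient descent: at each step $i$, an arbitrary black-box rule proposes a point $y_i$, the fallback proposes $z_i=w_i-\frac{\alpha}{L}\nabla f(w_i)$, and $w_{i+1}=y_i$ if $f(y_i)<f(z_i)$, otherwise $w_{i+1}=z_i$. $L$-smooth: $f(y)\le f(x)+\langle\nabla f(x),y-x\rangle+\frac{L}{2}\|y-x\|_2^2$; $\mu$-strongly convex: $f(y)\ge f(x)+\langle\nabla f(x),y-x\rangle+\frac{\mu}{2}\|y-x\|_2^2$, for all $x,y$. *)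

From HB Require Import structures.
From mathcomp Require Import all_boot all_order all_algebra.
From mathcomp Require Import all_classical all_reals all_analysis.
Set Implicit Arguments. Unset Strict Implicit. Unset Printing Implicit Defensive.
Import Order.TTheory GRing.Theory Num.Theory.
Import numFieldNormedType.Exports.
Local Open Scope ring_scope.

Section Defs.
Variables (R : realType) (n : nat).

Definition dotp (x y : 'rV[R]_n) : R := \sum_(i < n) x ord0 i * y ord0 i.
Definition norm2sq (x : 'rV[R]_n) : R := dotp x x.

Definition grad (f : 'rV[R]_n -> R) (x : 'rV[R]_n) : 'rV[R]_n :=
  \row_(i < n) derive f x (delta_mx ord0 i : 'rV[R]_n).

Definition L_smooth (f : 'rV[R]_n -> R) (L : R) : Prop :=
  forall x y, f y <= f x + dotp (grad f x) (y - x) + L / 2 * norm2sq (y - x).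

Definition strongly_convex (f : 'rV[R]_n -> R) (mu : R) : Prop :=
  forall x y, f y >= f x + dotp (grad f x) (y - x) + mu / 2 * norm2sq (y - x).

Definition gd_step (f : 'rV[R]_n -> R) (alpha L : R) (w : 'rV[R]_n) : 'rV[R]_n :=
  w - (alpha / L) *: grad f w.

Definition loss_guarded_seq (f : 'rV[R]_n -> R) (alpha L : R)
    (y w : nat -> 'rV[R]_n) : Prop :=
  forall i, w i.+1 = if f (y i) < f (gd_step f alpha L (w i))
                     then y i else gd_step f alpha L (w i).

End Defs.

From HB Require Import structures.
From mathcomp Require Import all_boot all_order all_algebra.
From mathcomp Require Import all_classical all_reals all_analysis.
From mathcomp Require Import ring lra.
Set Implicit Arguments. Unset Strict Implicit. Unset Printing Implicit Defensive.
Import Order.TTheory GRing.Theory Num.Theory.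
Import numFieldNormedType.Exports.
Local Open Scope ring_scope.
Local Open Scope classical_set_scope.

(* Set k := (alpha / L) (1 - alpha / 2) and f* := f w*.  L-smoothness makes a
   gradient step decrease f by at least k |grad f w|^2, and strong convexity
   gives the Polyak-Lojasiewicz inequality 2 mu (f w - f* ) <= |grad f w|^2,
   so the gradient step multiplies the optimality gap by 1 - 2 mu k < 1.  The
   guard only accepts proposals that do better than the gradient step, so the
   gaps of the guarded sequence decay geometrically.  Since grad f w* = 0,
   strong convexity also gives mu/2 |w - w*|^2 <= f w - f*, whence w_i -> w*. *)

Lemma contraction_le_geometric (R : realFieldType) (d : nat -> R) c :
  (forall i, 0 <= d i) -> (forall i, d i.+1 <= c * d i) ->
  forall i, d i <= geometric (d 0) (Num.max c 0) i.
Proof.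
move=> d_ge0 d_contr; elim=> [|i IH]; rewrite /geometric /=.
  by rewrite expr0 mulr1.
apply: le_trans (d_contr i) _; rewrite exprSr mulrA mulrC.
have c_le : c <= Num.max c 0 by rewrite le_max lexx.
apply: le_trans (ler_wpM2l (d_ge0 i) c_le) _.
by rewrite ler_wpM2r // le_max lexx orbT.
Qed.

Section SquaredNorm.
Variables (R : realType) (n : nat).
Implicit Types (u v : 'rV[R]_n) (t : R).

Lemma dotp0l v : dotp 0 v = 0.
Proof. by rewrite /dotp big1 // => i _; rewrite mxE mul0r. Qed.

Lemma dotpNr u v : dotp u (- v) = - dotp u v.
Proof. by rewrite /dotp -sumrN; apply: eq_bigr => i _; rewrite mxE mulrN. Qed.

Lemma dotpZr t u v : dotp u (t *: v) = t * dotp u v.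
Proof.
by rewrite /dotp mulr_sumr; apply: eq_bigr => i _; rewrite mxE mulrCA.
Qed.

Lemma norm2sqN v : norm2sq (- v) = norm2sq v.
Proof. by apply: eq_bigr => i _; rewrite mxE mulrNN. Qed.

Lemma norm2sqZ t v : norm2sq (t *: v) = t ^+ 2 * norm2sq v.
Proof.
by rewrite /norm2sq /dotp mulr_sumr; apply: eq_bigr => i _; rewrite mxE; ring.
Qed.

Lemma norm2sqD u v : norm2sq (u + v) = norm2sq u + 2 * dotp u v + norm2sq v.
Proof.
rewrite /norm2sq /dotp mulr_sumr -!big_split /=.
by apply: eq_bigr => i _; rewrite mxE; ring.
Qed.

Lemma sqr_entry_le_norm2sq v j : v ord0 j ^+ 2 <= norm2sq v.
Proof.
rewrite /norm2sq /dotp (bigD1 j) //= expr2 lerDl.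
by apply: sumr_ge0 => i _; rewrite -expr2 sqr_ge0.
Qed.

Lemma norm2sq_ge0 v : 0 <= norm2sq v.
Proof. by apply: sumr_ge0 => i _; rewrite -expr2 sqr_ge0. Qed.

Lemma norm2sq_le0 v : norm2sq v <= 0 -> v = 0.
Proof.
move=> v_le0; apply/rowP => j; rewrite mxE.
apply/eqP; rewrite -sqrf_eq0 eq_le sqr_ge0 andbT.
exact: le_trans (sqr_entry_le_norm2sq v j) v_le0.
Qed.

Lemma mx_norm_sqr_le_norm2sq v : `|v| ^+ 2 <= norm2sq v.
Proof.
have [->|/mx_norm_neq0 [[i j] /= v_ij]] := eqVneq `|v| 0.
  by rewrite expr0n norm2sq_ge0.
by rewrite [`|v|]v_ij /= (ord1 i) real_normK ?num_real // sqr_entry_le_norm2sq.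
Qed.

Lemma norm2sq_cvg (u : nat -> 'rV[R]_n) (a : 'rV[R]_n) (d : nat -> R) :
  d @ \oo --> 0 -> (forall i, norm2sq (u i - a) <= d i) -> u @ \oo --> a.
Proof.
move=> /cvgrPdist_lt d0 u_le; apply/cvgrPdistC_lt => e e0.
have e20 : 0 < e ^+ 2 by rewrite exprn_gt0.
apply: filterS (d0 _ e20) => i; rewrite sub0r normrN => /(le_lt_trans (ler_norm _)).
move=> /(le_lt_trans (u_le i)) /(le_lt_trans (mx_norm_sqr_le_norm2sq _)).
by rewrite ltr_pXn2r // nnegrE ?normr_ge0 // ltW.
Qed.

End SquaredNorm.

Section GradientStep.
Variables (R : realType) (n : nat) (f : 'rV[R]_n -> R).
Implicit Types (x z : 'rV[R]_n) (mu L alpha : R).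

Lemma L_smooth_gd_step L alpha x : 0 < L -> L_smooth f L ->
  f (gd_step f alpha L x) <=
    f x - alpha / L * (1 - alpha / 2) * norm2sq (grad f x).
Proof.
move=> L0 /(_ x (gd_step f alpha L x)).
have -> : gd_step f alpha L x - x = - ((alpha / L) *: grad f x).
  by rewrite /gd_step addrAC subrr add0r.
rewrite dotpNr dotpZr norm2sqN norm2sqZ -/(norm2sq _).
suff -> : f x - alpha / L * (1 - alpha / 2) * norm2sq (grad f x) =
  f x + - (alpha / L * norm2sq (grad f x)) +
  L / 2 * ((alpha / L) ^+ 2 * norm2sq (grad f x)) by [].
by field; rewrite gt_eqF.
Qed.

Lemma strongly_convex_PL mu x z : 0 < mu -> strongly_convex f mu ->
  2 * mu * (f x - f z) <= norm2sq (grad f x).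
Proof.
move=> mu0 /(_ x z); set g := grad f x; set d := z - x => sc.
have := norm2sq_ge0 (g + mu *: d); rewrite norm2sqD dotpZr norm2sqZ.
have := ler_wpM2l (ltW (mulr_gt0 (ltr0Sn _ 1) mu0)) sc.
rewrite -/(norm2sq g); nra.
Qed.

Lemma grad_min_eq0 L z : 0 < L -> L_smooth f L -> (forall x, f z <= f x) ->
  grad f z = 0.
Proof.
move=> L0 ls fmin; apply: norm2sq_le0.
have := le_trans (fmin _) (L_smooth_gd_step 1 z L0 ls).
have : 0 < 1 / L * (1 - 1 / 2) by rewrite mulr_gt0 ?divr_gt0 //; lra.
move: (1 / L * _) => k; nra.
Qed.

Lemma strongly_convex_quadratic_growth mu x z :
  strongly_convex f mu -> grad f z = 0 ->
  mu / 2 * norm2sq (x - z) <= f x - f z.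
Proof. by move=> /(_ z x) + gz0; rewrite gz0 dotp0l addr0 lerBrDl. Qed.

Lemma gd_step_gap_contraction mu L alpha x z :
  0 < mu -> 0 < L -> 0 <= alpha <= 2 ->
  strongly_convex f mu -> L_smooth f L ->
  f (gd_step f alpha L x) - f z <=
    (1 - 2 * mu * (alpha / L * (1 - alpha / 2))) * (f x - f z).
Proof.
move=> mu0 L0 /andP[a0 a2] sc ls.
have k0 : 0 <= alpha / L * (1 - alpha / 2).
  by rewrite mulr_ge0 ?divr_ge0 ?(ltW L0) //; lra.
have := ler_wpM2l k0 (strongly_convex_PL x z mu0 sc).
have := L_smooth_gd_step alpha x L0 ls.
move: (alpha / L * _) => k; nra.
Qed.

Lemma loss_guarded_le_gd_step alpha L (y w : nat -> 'rV[R]_n) i :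
  loss_guarded_seq f alpha L y w -> f (w i.+1) <= f (gd_step f alpha L (w i)).
Proof. by move=> /(_ i) ->; case: ifP => // /ltW. Qed.

End GradientStep.

Theorem theorem3 (R : realType) (n : nat) (f : 'rV[R]_n -> R) (mu L alpha : R)
  (wstar : 'rV[R]_n) (y w : nat -> 'rV[R]_n) :
  continuous f ->
  (forall x, differentiable f x) ->
  0 < mu -> 0 < L ->
  strongly_convex f mu -> L_smooth f L ->
  (forall x, f wstar <= f x) ->
  0 < alpha -> alpha < Num.min 2 (2 * mu * L) ->
  loss_guarded_seq f alpha L y w ->
  w @ \oo --> wstar.
Proof.
move=> _ _ mu0 L0 sc ls fmin a0; rewrite lt_min => /andP[a2 _] guarded.
set k := alpha / L * (1 - alpha / 2).
have k0 : 0 < k by rewrite mulr_gt0 ?divr_gt0 //; lra.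
set c := Num.max (1 - 2 * mu * k) 0.
have c_lt1 : `|c| < 1.
  by rewrite ger0_norm ?le_max ?lexx ?orbT // gt_max ltr01 andbT; nra.
set gap := fun i => f (w i) - f wstar.
have gap_le : forall i, gap i <= geometric (gap 0) c i.
  apply: contraction_le_geometric => i; first by rewrite subr_ge0.
  apply: le_trans (gd_step_gap_contraction _ _ mu0 L0 _ sc ls).
    by rewrite lerB // (loss_guarded_le_gd_step i guarded).
  by rewrite ltW //= ltW.
apply: (norm2sq_cvg (d := geometric (2 / mu * gap 0) c)) => [|i].
  exact: cvg_geometric.
have := strongly_convex_quadratic_growth (w i) sc (grad_min_eq0 L0 ls fmin).
move=> /le_trans /(_ (gap_le i)) growth.
by rewrite /geometric /= -[2 / mu * _ * _]mulrA -invf_div ler_pdivlMl ?divr_gt0.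
Qed.
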